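(* For every $a_1,\dots,a_{2^n}\in F$ and every $w\in F^d$: (1) there is a prover strategy $r$ such that Alice's output equals $\tilde A(w)$ with probability $1$; (2) for every prover strategy $r$, Alice's output lies in $\{\tilde A(w),Err\}$ with probability at least $1-1/n^{c-1.5}$.
   Context: Parameters. - $n>4$ is a power of $2$ with $\log_2 n$ even, and $d:=2n/\log_2 n$ is assumed to be an integer. - $F$ is a finite field with $|F|=2^a=n^c$, where $c\ge 2$ is a constant integer. - $H\subset F$ is a fixed subset with $|H|=\sqrt n$ (so $|H^d|=2^n$), and $\pi:H^d\to[2^n]$ is a fixed bijection. Low degree extension. - For $a_1,\dots,a_{2^n}\in F$, define $A:H^d\to F$ by $A(z)=a_{\pi(z)}$. - The low degree extension $\tilde A:F^d\to F$ is the unique polynomial of degree at most $|H|-1$ in each variable that agrees with $A$ on $H^d$. Its total degree is less than $n^{1.5}$. - The quantum low degree extension is $|\Psi(a_1,\dots,a_{2^n})\rangle=|F|^{-d/2}\sum_{z\in F^d}|z_1\rangle\cdots|z_d\rangle|\tilde A(z)\rangle$, a state of $O(n)$ qubits where each register holds an element of $F$. Measuring it in the standard basis yields a uniformly random $z\in F^d$ together with $\tilde A(z)$. Retrieval protocol (Alice holds $|\Psi(a_1,\dots,a_{2^n})\rangle$ and wants $\tilde A(w)$). - Alice measures the state, obtaining a uniform $z\in F^d$ and $\tilde A(z)$. If $z=w$, she outputs $\tilde A(z)$. - Otherwise she sends the line $\ell=\{w+(z-w)t:t\in F\}$ to the prover Merlin. Merlin knows $w$ and $\ell$ but not $z$.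 - A prover strategy $r$ is a deterministic assignment, to each line $\ell$ through $w$, of a function $g_\ell:\ell\to F$. - Let $g(t)=g_\ell(w+(z-w)t)$. Alice outputs $Err$ if $g$ is not a univariate polynomial of degree $<n^{1.5}$, or if $g(1)\ne\tilde A(z)$. Otherwise she outputs $g(0)$. *)

From HB Require Import structures.
From Stdlib Require Import ClassicalEpsilon.
From mathcomp Require Import all_boot all_order all_algebra.
From mathcomp Require Import mpoly.
Set Implicit Arguments. Unset Strict Implicit. Unset Printing Implicit Defensive.
Import Order.TTheory GRing.Theory Num.Theory.
Local Open Scope ring_scope.

Notation pt F d := {ffun 'I_d -> F}.

Definition inHd (F : finFieldType) (d : nat) (H : {set F}) (z : pt F d) : bool :=
  [forall i, z i \in H].

Definition indiv_deg_lt (F : finFieldType) (d : nat) (p : {mpoly F[d]}) (k : nat) : Prop :=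
  forall m, m \in msupp p -> forall i : 'I_d, (m i < k)%N.

Definition is_lde (F : finFieldType) (d : nat) (H : {set F}) (A : pt F d -> F)
  (At : {mpoly F[d]}) : Prop :=
  indiv_deg_lt At #|H| /\ forall z : pt F d, inHd H z -> At.@[z] = A z.

Definition linept (F : finFieldType) (d : nat) (w z : pt F d) (t : F) : pt F d :=
  [ffun i => w i + (z i - w i) * t].

Definition line (F : finFieldType) (d : nat) (w z : pt F d) : {set pt F d} :=
  [set linept w z t | t : F].

(* A prover strategy: a deterministic assignment to each line (given as a set
   of points) of a function g_l on it (values off the line are irrelevant). *)
Definition strategy (F : finFieldType) (d : nat) := {set pt F d} -> pt F d -> F.

Definition is_poly_deg_lt (F : finFieldType) (g : F -> F) (D : nat) : Prop :=
  exists p : {poly F}, (size p <= D)%N /\ forall t, g t = p.[t].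

(* Alice's output on measurement outcome z (None = Err). Her output as a
   function of z; the degree bound D stands for n^1.5. *)
Definition alice_out (F : finFieldType) (d : nat) (D : nat) (At : {mpoly F[d]})
  (w : pt F d) (r : strategy F d) (z : pt F d) : option F :=
  if z == w then Some At.@[z] else
  let g := fun t => r (line w z) (linept w z t) in
  if excluded_middle_informative (is_poly_deg_lt g D) then
    (if g 1 == At.@[z] then Some (g 0) else None)
  else None.

Definition prob_unif (F : finFieldType) (d : nat) (P : pred (pt F d)) : rat :=
  (#|[set z | P z]|)%:R / (#|{: pt F d}|)%:R.

(** The honest prover answers every line with the restriction of [At] to it,
    a polynomial of degree at most [d (|H| - 1) < n |H|], so Alice always
    outputs [At w]. Against an arbitrary prover, Alice is fooled at [z] only if
    Merlin's polynomial [g] on the line through [w] and [z] differs from the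
    restriction [q] of [At] at [w] yet agrees with it at [z]. All points of a
    line share the same [g], so on each line the fooling points are roots of
    the nonzero polynomial [g - q] of degree [< n |H|]. Double counting over
    lines through [w] bounds the probability of being fooled by [n |H| / |F|]. *)
From HB Require Import structures.
From Stdlib Require Import ClassicalEpsilon.
From mathcomp Require Import all_boot all_order all_algebra.
From mathcomp Require Import mpoly.
From mathcomp Require Import ring zify.
Import Order.TTheory GRing.Theory Num.Theory.
Local Open Scope ring_scope.
Set Implicit Arguments. Unset Strict Implicit.

Lemma size_affine_poly (R : nzRingType) (a b : R) :
  (size (a%:P + b *: 'X)%R <= 2)%N.
Proof.
apply: leq_trans (size_polyD _ _) _.
rewrite geq_max (leq_trans (size_polyC_leq1 a)) //.
by rewrite (leq_trans (size_scale_leq _ _)) ?size_polyX.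
Qed.

Section Lines.
Variables (F : finFieldType) (d : nat).
Implicit Types (w z : pt F d) (t : F).

Lemma linept0 w z : linept w z 0 = w.
Proof. by apply/ffunP => i; rewrite ffunE mulr0 addr0. Qed.

Lemma linept1 w z : linept w z 1 = z.
Proof. by apply/ffunP => i; rewrite ffunE mulr1 addrC subrK. Qed.

Lemma lineptM w z a t : linept w (linept w z a) t = linept w z (a * t).
Proof. by apply/ffunP => i; rewrite !ffunE; ring. Qed.

Lemma line_linept w z a : a != 0 -> line w (linept w z a) = line w z.
Proof.
move=> a0; apply/setP => x; apply/imsetP/imsetP => -[t _ ->].
  by exists (a * t) => //; rewrite lineptM.
by exists (t / a) => //; rewrite lineptM mulrC divfK.
Qed.

Lemma linept_inj w t : t != 0 -> injective (fun z => linept w z t).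
Proof.
move=> t0 z1 z2 /ffunP e; apply/ffunP => i; move: (e i); rewrite !ffunE.
by move/addrI/(mulIf t0)/subIr.
Qed.

Lemma mpoly_on_line (At : {mpoly F[d]}) N : indiv_deg_lt At N -> forall w z,
  exists2 q : {poly F}, (size q <= d * N.-1 + 1)%N &
    forall t, q.[t] = At.@[linept w z t].
Proof.
move=> hA w z; pose f i := (w i)%:P + (z i - w i) *: 'X.
exists (\sum_(m <- msupp At) At@_m *: \prod_i f i ^+ m i); last first.
  move=> t; rewrite mevalE horner_sum; apply: eq_bigr => m _.
  rewrite hornerZ horner_prod; congr (_ * _); apply: eq_bigr => i _.
  by rewrite horner_exp /f hornerD hornerC hornerZ hornerX ffunE mulrC.
apply: leq_trans (size_sum _ _ _) _; apply/bigmax_leqP_seq => m hm _.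
apply: leq_trans (size_scale_leq _ _) _.
apply: leq_trans (size_poly_prod_leq _ _) _.
have size_factor i : (size (f i ^+ m i) <= N)%N.
  apply: leq_trans (size_poly_exp_leq _ _) _.
  have := size_affine_poly (w i) (z i - w i); have := hA m hm i.
  rewrite -/(f i); move: (size (f i)) (m i) => s e; nia.
have : (\sum_(i < d) size (f i ^+ m i) <= \sum_(i < d) N)%N.
  by apply: leq_sum => i _; apply: size_factor.
rewrite sum_nat_const card_ord; case: N {hA size_factor} => [|N] /=; rewrite ?mulnS; lia.
Qed.

Lemma card_le_by_line_scaling (P : pred (pt F d)) w K :
  (forall z, #|[set t : F | (t != 0%R) && P (linept w z t)]| <= K)%N ->
  (#|[set z | P z]| * #|F|.-1 <= #|{: pt F d}| * K)%N.
Proof.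
move=> hK.
have card_scaled t : t != 0 -> #|[set z | P (linept w z t)]| = #|[set z | P z]|.
  move=> t0; rewrite -[RHS](card_preimset _ (linept_inj (w := w) t0)).
  by apply: eq_card => z; rewrite !inE.
rewrite -(cardC1 (0 : F)) mulnC -sum_nat_const.
rewrite (eq_bigr (fun t => #|[set z | P (linept w z t)]|)); last first.
  by move=> t /card_scaled.
under eq_bigr do rewrite -sum1_card.
rewrite (exchange_big_dep predT) //= -sum_nat_const.
apply: leq_sum => z _; apply: leq_trans (hK z); rewrite sum1_card.
by apply: subset_leq_card; apply/subsetP => t; rewrite unfold_in !inE.
Qed.

End Lines.

Section Probability.
Variables (F : finFieldType) (d : nat).
Implicit Types P Q : pred (pt F d).

Lemma card_pt_gt0 : (0 < #|{: pt F d}|)%N.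
Proof. by apply/card_gt0P; exists [ffun=> 0]. Qed.

Lemma prob_unif1 P : (forall z, P z) -> prob_unif P = 1.
Proof.
move=> hP; rewrite /prob_unif (eq_card (B := predT)) => [|z]; last by rewrite inE hP.
by rewrite divff // pnatr_eq0 -lt0n card_pt_gt0.
Qed.

Lemma prob_unifC P Q : (forall z, P z = ~~ Q z) -> prob_unif P = 1 - prob_unif Q.
Proof.
move=> hPQ; rewrite /prob_unif.
have -> : [set z | P z] = ~: [set z | Q z] by apply/setP => z; rewrite !inE hPQ.
rewrite [#|~: _|]cardsCs setCK natrB ?max_card // mulrBl divff //.
by rewrite pnatr_eq0 -lt0n card_pt_gt0.
Qed.

Lemma prob_unif_le P (a b : nat) : (0 < b)%N ->
  (#|[set z | P z]| * b <= #|{: pt F d}| * a)%N -> prob_unif P <= a%:R / b%:R.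
Proof.
move=> b0 hPab.
rewrite /prob_unif ler_pdivrMr ?ltr0n ?card_pt_gt0 // mulrAC ler_pdivlMr ?ltr0n //.
by rewrite -!natrM ler_nat [(a * _)%N]mulnC.
Qed.

End Probability.

Section Retrieval.
Variables (F : finFieldType) (d D N : nat) (At : {mpoly F[d]}) (w : pt F d).
Hypotheses (hA : indiv_deg_lt At N) (hD : (d * N.-1 + 1 <= D)%N).

Definition honest_prover : strategy F d := fun _ p => At.@[p].

Lemma alice_out_honest z : alice_out D At w honest_prover z = Some At.@[w].
Proof.
rewrite /alice_out; case: eqP => [-> //|_].
destruct excluded_middle_informative as [g_poly|no_poly].
  by rewrite /honest_prover linept1 eqxx linept0.
exfalso; apply: no_poly; have [q hq hqt] := mpoly_on_line hA w z.
by exists q; split; [exact: leq_trans hD | move=> t; rewrite hqt].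
Qed.

Definition fooled (r : strategy F d) (z : pt F d) : bool :=
  alice_out D At w r z \notin [:: Some At.@[w]; None].

Lemma fooledP r z : fooled r z ->
  [/\ r (line w z) z = At.@[z], r (line w z) w != At.@[w]
    & is_poly_deg_lt (fun t => r (line w z) (linept w z t)) D].
Proof.
rewrite /fooled /alice_out; case: eqP => [->|_]; first by rewrite !inE eqxx.
destruct excluded_middle_informative as [g_poly|]; last by rewrite !inE eqxx orbT.
case: eqP => [g1|]; last by rewrite !inE eqxx orbT.
rewrite linept1 in g1; rewrite !inE linept0 => /norP[g0 _]; split => //.
Qed.

Lemma card_fooled_on_line r z :
  (#|[set t : F | (t != 0%R) && fooled r (linept w z t)]| <= D.-1)%N.
Proof.
set S := [set _ | _]; have [->|[t0]] := set_0Vmem S; first by rewrite cards0.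
rewrite inE => /andP[t0_nz /fooledP[_]].
rewrite line_linept // => g0 [p [hp hpt]].
(* [p] and [q] are Merlin's answer and [At] on the line parametrized from
   [linept w z t0]; the fooling parameter [t] becomes the root [t / t0]. *)
have [q hq hqt] := mpoly_on_line hA w (linept w z t0).
have : (size [seq t / t0 | t <- enum S] < size (p - q)%R)%N.
  apply: max_poly_roots.
  - apply: contra g0 => /eqP/subr0_eq pq.
    by have := hpt 0; rewrite linept0 pq hqt linept0 => ->.
  - apply/allP => _ /mapP[t + ->].
    rewrite mem_enum inE => /andP[t_nz /fooledP[gt _ _]].
    rewrite line_linept // in gt.
    by rewrite rootE hornerD hornerN -hpt hqt !lineptM mulrC divfK // gt subrr.
  - rewrite map_inj_uniq ?enum_uniq // => x y /= /(congr1 ( *%R^~ t0)).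
    by rewrite !divfK.
rewrite size_map -cardE; have : (size (p - q)%R <= D)%N.
  by apply: leq_trans (size_polyD _ _) _; rewrite size_polyN geq_max hp (leq_trans hq).
by move=> size_pq card_lt; move: (leq_trans card_lt size_pq); case: (D).
Qed.

Lemma prob_fooled_le r : prob_unif (fooled r) <= D%:R / #|F|%:R.
Proof.
have hF : (0 < #|F|)%N by apply/card_gt0P; exists 0.
apply: prob_unif_le => //.
have := card_le_by_line_scaling (card_fooled_on_line r).
have : (#|[set z | fooled r z]| <= #|{: pt F d}|)%N by apply: max_card.
have : (0 < D)%N by apply: leq_trans hD; rewrite addn1.
case: (D) => // D' _; case: #|F| hF => // F' _ /=; rewrite !mulnS; lia.
Qed.

End Retrieval.

Theorem mainTheorem3
  (n k : nat) (hn4 : (4 < n)%N) (hnk : n = (2 ^ k)%N) (hk : ~~ odd k)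
  (d : nat) (hd : (d * k = 2 * n)%N)
  (F : finFieldType) (e c : nat) (hc : (2 <= c)%N)
  (hFe : #|F| = (2 ^ e)%N) (hFc : #|F| = (n ^ c)%N)
  (H : {set F}) (hH : (#|H| ^ 2)%N = n)
  (pi : pt F d -> 'I_(2 ^ n))
  (hpi_inj : {in [pred z | inHd H z] &, injective pi})
  (hpi_surj : forall i : 'I_(2 ^ n), exists2 z, inHd H z & pi z = i) :
  forall (a : 'I_(2 ^ n) -> F) (At : {mpoly F[d]}),
    is_lde H (fun z => a (pi z)) At ->
  forall w : pt F d,
    (exists r : strategy F d,
        prob_unif (fun z => alice_out (n * #|H|) At w r z == Some At.@[w]) = 1)
    /\
    (forall r : strategy F d,
        1 - 1 / ((n ^ c)%:R / (n * #|H|)%:R) <=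
        prob_unif (fun z => alice_out (n * #|H|) At w r z \in [:: Some At.@[w]; None])).
Proof.
move=> a At [hA _] w.
have hk2 : (2 <= k)%N by case: k hnk hn4 {hk hd} => [|[|[|k']]] ->.
have hdn : (d <= n)%N by have := leq_mul (leqnn d) hk2; rewrite hd; lia.
have hH0 : (0 < #|H|)%N by case: #|H| hH hn4 => [|h] // <-.
have hD : (d * #|H|.-1 + 1 <= n * #|H|)%N.
  by case: #|H| hH0 => // h _ /=; rewrite mulnS; nia.
split.
  exists (honest_prover At); apply: prob_unif1 => z.
  by rewrite (alice_out_honest w hA hD).
move=> r; rewrite div1r invf_div -hFc (prob_unifC (Q := fooled (n * #|H|) At w r)).
  by rewrite lerD2l lerN2; exact: prob_fooled_le w hA hD r.
by move=> z; rewrite /fooled negbK.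
Qed.
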